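(* Let $X$ be a regular topological space. The following are equivalent: (a) $X$ is locally compact (every point has a compact neighborhood); (b) the quantale $\mathcal{O}(X)$ is blooming; (c) the m-filter $\{X\}\in\operatorname{mF}(\mathcal{O}(X))$ is locally solid.
   Context: $\mathcal{O}(X)$ is the quantale of open subsets of $X$, ordered by inclusion, with join = union, multiplication = intersection, top $X$. For a quantale $Q$ (poset with all nonempty joins, top $1$, commutative associative unital multiplication distributing over nonempty joins): an m-filter is a subset containing $1$, upward closed, closed under multiplication. Suspension: order nonempty subsets of $Q$ by $S\le T$ iff each $s\in S$ is below the join of finitely many elements of $T$; $\Sigma Q$ is the poset of equivalence classes with multiplication $S\cdot T=\{st\}$; $\sigma_Q:\Sigma Q\to Q$, $S\mapsto\sum S$. $Q$ is blooming if $\sigma_Q$ has a left adjoint $\sigma_Q^\flat$ (order-preserving with $\sigma_Q^\flat(x)\le S\iff x\le\sigma_Q(S)$) and $\sigma_Q^\flat(ab)=\sigma_Q^\flat(a)\cdot\sigma_Q^\flat(b)$ for all $a,b$. An m-filter $\mathcal{F}$ is locally solid if there is a nonempty $W\subseteq Q$ with $\sum W=1$ such that for every $w\in W$ and every nonempty family $(x_i)_{i\in I}$ with $\sum_ix_i\in\mathcal{F}$ there exist $t\in\mathcal{F}$ and a finite nonempty $I_0\subseteq I$ with $tw\le\sum_{i\in I_0}x_i$. *)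

From HB Require Import structures.
From mathcomp Require Import all_boot all_order.
From mathcomp Require Import all_classical all_reals all_analysis.
Set Implicit Arguments. Unset Strict Implicit. Unset Printing Implicit Defensive.
Local Open Scope classical_set_scope.

(* The quantale O(X): open subsets of X, join = union, product = intersection,
   top = setT.  A "subset of O(X)" is a set of sets all of which are open. *)
Section OX.
Variable X : topologicalType.

Definition locally_compact_pt : Prop :=
  forall x : X, exists K : set X, nbhs x K /\ compact K.

Definition subset_OX (S : set (set X)) : Prop := forall s, S s -> open s.

Definition susp_elt (S : set (set X)) : Prop := subset_OX S /\ S !=set0.

Definition sjoin (S : set (set X)) : set X := \bigcup_(s in S) s.

Definition susp_le (S T : set (set X)) : Prop :=
  forall s, S s -> exists (n : nat) (f : nat -> set X),
    (0 < n)%N /\ (forall i, (i < n)%N -> T (f i)) /\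
    s `<=` \bigcup_(i in [set i | (i < n)%N]) f i.

Definition susp_mul (S T : set (set X)) : set (set X) :=
  [set u | exists s t, S s /\ T t /\ u = s `&` t].

(* sigma_Q has a left adjoint sigma_flat (on equivalence classes: we pick
   representatives, so equalities in Sigma Q are mutual <=). *)
Definition blooming : Prop :=
  exists flat : set X -> set (set X),
    (forall a, open a -> susp_elt (flat a)) /\
    (forall a b, open a -> open b -> a `<=` b -> susp_le (flat a) (flat b)) /\
    (forall a S, open a -> susp_elt S ->
        (susp_le (flat a) S <-> a `<=` sjoin S)) /\
    (forall a b, open a -> open b ->
        susp_le (flat (a `&` b)) (susp_mul (flat a) (flat b)) /\
        susp_le (susp_mul (flat a) (flat b)) (flat (a `&` b))).

Definition mfilter (F : set (set X)) : Prop :=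
  subset_OX F /\ F setT /\
  (forall a b, F a -> open b -> a `<=` b -> F b) /\
  (forall a b, F a -> F b -> F (a `&` b)).

Definition locally_solid (F : set (set X)) : Prop :=
  exists W : set (set X), susp_elt W /\ sjoin W = setT /\
    forall w, W w ->
    forall (I : Type) (x : I -> set X),
      (exists i : I, True) -> (forall i, open (x i)) ->
      F (\bigcup_(i in setT) x i) ->
      exists t, F t /\ exists (n : nat) (g : nat -> I),
        (0 < n)%N /\ t `&` w `<=` \bigcup_(k in [set k | (k < n)%N]) x (g k).

End OX.

From HB Require Import structures.
From mathcomp Require Import all_boot all_order.
From mathcomp Require Import all_classical all_reals all_analysis.
From mathcomp Require Import finmap.
Set Implicit Arguments. Unset Strict Implicit. Unset Printing Implicit Defensive.
Local Open Scope classical_set_scope.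

(** In a regular locally compact space, σ♭(a) can be taken to be the set of
   opens w lying inside a compact closed subset of a: an open cover of a
   covers that compact set finitely, which gives the adjunction, and such
   sets are closed under binary intersection, which gives multiplicativity.
   Conversely, σ♭(X) covers X by opens w that are finitely covered by every
   open cover of X, which is local solidity of {X}.  Such a w makes each of
   its closed subsets K compact (add the complement of K to any cover of K),
   so regularity turns the cover into compact closed neighbourhoods. *)

(* [compact_cover] is only stated for pointed spaces. *)
Definition pointed_at (X : topologicalType) (p : X) : Type := X.
HB.instance Definition _ (X : topologicalType) (p : X) :=
  Topological.copy (pointed_at p) X.
HB.instance Definition _ (X : topologicalType) (p : X) :=
  isPointed.Build (pointed_at p) p.

Lemma compact_coverE (X : topologicalType) : compact = @cover_compact X.
Proof.
have [[p _]|noX] := pselect (exists p : X, True).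
  exact: (@compact_cover (pointed_at p)).
have X0 (A : set X) : A = set0 by apply/seteqP; split=> // x; case: noX; exists x.
rewrite predeqE => A; rewrite (X0 A); split=> _; last exact: compact0.
by move=> I D f _ _; exists fset0%fset.
Qed.

Section FiniteCovers.
Variable X : topologicalType.

(* [susp_le S T] unfolds to [forall s, S s -> finitely_covered T s]. *)
Definition finitely_covered (T : set (set X)) (s : set X) : Prop :=
  exists (n : nat) (f : nat -> set X),
    (0 < n)%N /\ (forall i, (i < n)%N -> T (f i)) /\
    s `<=` \bigcup_(i in [set i | (i < n)%N]) f i.

Lemma finitely_coveredS (T : set (set X)) (s s' : set X) :
  s `<=` s' -> finitely_covered T s' -> finitely_covered T s.
Proof.
by move=> ss' [n [f [n0 [Tf cov]]]]; exists n, f; split=> //; split=> // x /ss' /cov.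
Qed.

Lemma finitely_covered_mem (T : set (set X)) (s : set X) :
  T s -> finitely_covered T s.
Proof. by move=> Ts; exists 1%N, (fun=> s); split=> //; split=> // x sx; exists 0%N. Qed.

Lemma finitely_covered_seq (T : set (set X)) (t0 s : set X) (l : seq (set X)) :
  T t0 -> {in l, forall u, T u} -> s `<=` \bigcup_(u in [set` l]) u ->
  finitely_covered T s.
Proof.
move=> Tt0 Tl cov; exists (size l).+1, (nth t0 (t0 :: l)); split=> //; split.
  move=> i il; have : nth t0 (t0 :: l) i \in t0 :: l by exact: mem_nth.
  by rewrite inE => /predU1P [->|/Tl].
move=> x /cov [u ul ux]; exists (index u l).+1; last by rewrite /= nth_index.
by rewrite /= ltnS index_mem.
Qed.

Lemma finitely_covered_compact (S : set (set X)) (K : set X) :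
  compact K -> S !=set0 -> subset_OX S -> K `<=` sjoin S ->
  finitely_covered S K.
Proof.
rewrite compact_coverE => cK [t0 St0] oS KS.
have [D' D'S cov] := cK _ S id oS KS.
apply: (finitely_covered_seq (l := D') St0) => [u /D'S|x /cov [u]].
  by rewrite in_setE.
by exists u.
Qed.

End FiniteCovers.

Section CompactlyBelow.
Variable X : topologicalType.

Definition compactly_below (a w : set X) : Prop :=
  open w /\ exists K, compact K /\ closed K /\ w `<=` K /\ K `<=` a.

Lemma compactly_below0 (a : set X) : compactly_below a set0.
Proof.
split; first exact: open0.
exists set0; split; first exact: compact0.
by split; [exact: closed0|split=> x].
Qed.

Lemma compactly_below_susp_elt (a : set X) : susp_elt (compactly_below a).
Proof. by split; [move=> w []|exists set0; exact: compactly_below0]. Qed.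

Lemma compactly_belowI (a b s t : set X) :
  compactly_below a s -> compactly_below b t -> compactly_below (a `&` b) (s `&` t).
Proof.
move=> [os [K [cK [clK [sK Ka]]]]] [ot [L [cL [clL [tL Lb]]]]].
split; first exact: openI.
have clKL := closedI clK clL.
exists (K `&` L); split; first by apply: (subclosed_compact clKL cK) => x [].
split=> //; split; first by move=> x [/sK ? /tL ?].
by move=> x [/Ka ? /Lb ?].
Qed.

Lemma susp_elt_mul (S T : set (set X)) :
  susp_elt S -> susp_elt T -> susp_elt (susp_mul S T).
Proof.
move=> [oS [s Ss]] [oT [t Tt]]; split; last by exists (s `&` t), s, t.
by move=> _ [u [v [Su [Tv ->]]]]; apply: openI; [exact: oS|exact: oT].
Qed.

Lemma susp_le_compactly_below (a : set X) (S : set (set X)) :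
  susp_elt S -> a `<=` sjoin S -> susp_le (compactly_below a) S.
Proof.
move=> [oS neS] aS w [_ [K [cK [_ [wK Ka]]]]].
apply: finitely_coveredS wK _.
exact: finitely_covered_compact cK neS oS (subset_trans Ka aS).
Qed.

End CompactlyBelow.

Section LocallyCompactBlooming.
Variable X : topologicalType.
Hypothesis X_regular : regular_space X.
Hypothesis X_locally_compact : locally_compact_pt X.

Lemma compactly_below_cover (a : set X) (x : X) :
  open a -> a x -> exists2 w, compactly_below a w & w x.
Proof.
move=> oa ax; have [K [Kx cK]] := X_locally_compact x.
have : nbhs x (a `&` K) by apply: filterI => //; exact: open_nbhs_nbhs.
move=> /X_regular [V Vx clVaK]; exists (interior V) => //.
split; first exact: open_interior.
have clV := @closed_closure X V.
exists (closure V); split; first by apply: (subclosed_compact clV cK) => y /clVaK [].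
split=> //; split; last by move=> y /clVaK [].
by move=> y /nbhs_singleton; exact: subset_closure.
Qed.

Lemma compactly_below_sjoin (a : set X) : open a -> a `<=` sjoin (compactly_below a).
Proof. by move=> oa x ax; have [w aw wx] := compactly_below_cover oa ax; exists w. Qed.

Lemma compactly_below_adjoint (a : set X) (S : set (set X)) :
  open a -> susp_elt S -> (susp_le (compactly_below a) S <-> a `<=` sjoin S).
Proof.
move=> oa eS; split; last exact: susp_le_compactly_below.
move=> le x ax; have [w aw wx] := compactly_below_cover oa ax.
have [n [f [_ [Sf cov]]]] := le w aw.
by have [i ilt fxi] := cov x wx; exists (f i) => //; exact: Sf.
Qed.

Lemma locally_compact_blooming : blooming X.
Proof.
exists (@compactly_below X); split; first by move=> a _; exact: compactly_below_susp_elt.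
split.
  move=> a b oa ob ab; apply: susp_le_compactly_below; first exact: compactly_below_susp_elt.
  exact: subset_trans ab (compactly_below_sjoin ob).
split; first by move=> a S oa eS; exact: compactly_below_adjoint.
move=> a b oa ob; split.
  apply: susp_le_compactly_below; first by apply: susp_elt_mul; exact: compactly_below_susp_elt.
  move=> x [/(compactly_below_sjoin oa) [s aS sx] /(compactly_below_sjoin ob) [t bt tx]].
  by exists (s `&` t); [exists s, t|].
move=> _ [s [t [aS [bt ->]]]]; apply: finitely_covered_mem.
exact: compactly_belowI.
Qed.

End LocallyCompactBlooming.

Section WayBelowTop.
Variable X : topologicalType.

Definition way_below_top (w : set X) : Prop :=
  forall (I : Type) (x : I -> set X), (exists i : I, True) ->
    (forall i, open (x i)) -> \bigcup_(i in setT) x i = setT ->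
    exists (n : nat) (g : nat -> I), w `<=` \bigcup_(k in [set k | (k < n)%N]) x (g k).

Lemma way_below_top_closed_compact (K w : set X) :
  closed K -> K `<=` w -> way_below_top w -> compact K.
Proof.
rewrite compact_coverE => clK Kw wK J D f oDf Kf.
pose y (o : option {i | D i}) := if o is Some i then f (sval i) else ~` K.
have oy o : open (y o) by case: o => [[i Di]|]; [exact: oDf|exact: closed_openC].
have cover_y : \bigcup_(o in setT) y o = setT.
  apply/seteqP; split=> // z _; have [Kz|nKz] := pselect (K z); last by exists None.
  by have [i Di fiz] := Kf z Kz; exists (Some (exist _ i Di)).
have [n [g wg]] := wK _ y (ex_intro _ None I) oy cover_y.
exists (seq_fset tt (pmap (fun k => omap sval (g k)) (iota 0 n))).
  move=> i; rewrite seq_fsetE mem_pmap in_setE => /mapP [k _].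
  by case: (g k) => // -[j Dj] [->].
move=> z Kz; have [k kn] := wg z (Kw z Kz).
case gk: (g k) => [[i Di]|] // fiz; exists i => //.
change (i \in seq_fset tt (pmap (fun k => omap sval (g k)) (iota 0 n))).
rewrite seq_fsetE mem_pmap; apply/mapP; exists k; last by rewrite gk.
by rewrite mem_iota.
Qed.

End WayBelowTop.

Section LocallySolidTop.
Variable X : topologicalType.

Lemma mfilter_setT : mfilter [set setT : set X].
Proof.
split; first by move=> _ ->; exact: openT.
split=> //; split; last by move=> _ _ -> ->; rewrite setTI.
by move=> _ b -> _ Tb; apply/seteqP; split=> // z _; exact: Tb.
Qed.

Lemma locally_solid_setT_way_below_top :
  locally_solid [set setT : set X] ->
  exists2 W : set (set X), sjoin W = setT & forall w, W w -> open w /\ way_below_top w.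
Proof.
move=> [W [[oW _] [cW sol]]]; exists W => // w Ww; split; first exact: oW.
move=> I x neI ox cx; have [_ [-> [n [g [_ cov]]]]] := sol w Ww I x neI ox cx.
by exists n, g => y wy; exact: cov.
Qed.

Lemma locally_solid_setT_locally_compact :
  regular_space X -> locally_solid [set setT : set X] -> locally_compact_pt X.
Proof.
move=> X_regular /locally_solid_setT_way_below_top [W cW Wtop] x.
have [w Ww wx] : sjoin W x by rewrite cW.
have [ow wtop] := Wtop w Ww.
have [V Vx clVw] := X_regular x w (open_nbhs_nbhs (conj ow wx)).
exists (closure V); split; first by apply: filterS Vx; exact: subset_closure.
exact: way_below_top_closed_compact (@closed_closure X V) clVw wtop.
Qed.

Lemma blooming_locally_solid_setT : blooming X -> locally_solid [set setT : set X].
Proof.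
move=> [fl [fl_elt [_ [fl_adj _]]]].
have fl_sjoin : sjoin (fl setT) = setT.
  apply/seteqP; split=> // y _.
  have le : susp_le (fl setT) (fl setT) by move=> w fw; exact: finitely_covered_mem.
  exact: (fl_adj setT _ openT (fl_elt _ openT)).1 le y I.
exists (fl setT); split; first exact: fl_elt openT.
split=> // w fw I x [i0 _] ox cx.
have ex : susp_elt (range x) by split; [move=> _ [i _ <-]|exists (x i0), i0].
have cover_x : setT `<=` sjoin (range x).
  move=> y _; have [i _ xiy] : (\bigcup_(i in setT) x i) y by rewrite cx.
  by exists (x i) => //; exists i.
have [n [f [n0 [xf cov]]]] := (fl_adj _ _ openT ex).2 cover_x w fw.
have /boolp.choice [g fg] k : exists i, (k < n)%N -> f k = x i.
  by have [kn|] := ltnP k n; [have [i _ <-] := xf k kn; exists i|exists i0].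
exists setT; split=> //; exists n, g; split=> // y [_ wy].
by have [k kn fky] := cov y wy; exists k; rewrite // -fg.
Qed.

End LocallySolidTop.

Theorem mainTheorem10 (X : topologicalType) :
  regular_space X ->
  (mfilter [set setT : set X] /\
   (locally_compact_pt X <-> blooming X) /\
   (blooming X <-> locally_solid [set setT : set X])).
Proof.
move=> X_regular; split; first exact: mfilter_setT.
have solid_lc := locally_solid_setT_locally_compact X_regular.
have lc_blooming := locally_compact_blooming X_regular.
split; split.
- exact: lc_blooming.
- by move/blooming_locally_solid_setT/solid_lc.
- exact: blooming_locally_solid_setT.
- by move/solid_lc/lc_blooming.
Qed.
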